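(* Let $G(\lambda)\in\mathbb F(\lambda)^{p\times m}$, let $L(\lambda)$ be a strong block minimal bases linearization of $G(\lambda)$ as in the context, with transfer function matrix $\widehat G(\lambda)=\begin{bmatrix} M(\lambda)+\widehat K_2^TC(\lambda I_n-A)^{-1}B\widehat K_1 & K_2(\lambda)^T\\ K_1(\lambda) & 0\end{bmatrix}$. (a) If $h(\lambda)\in\mathcal N_r(G(\lambda))$ then $z(\lambda)=\begin{bmatrix}N_1(\lambda)^T\\ -\widehat N_2(\lambda)M(\lambda)N_1(\lambda)^T\end{bmatrix}h(\lambda)\in\mathcal N_r(\widehat G(\lambda))$. Moreover, if $h(\lambda)\ne0$ is a vector polynomial, then $z(\lambda)$ is a vector polynomial and $\deg z(\lambda)=\deg(N_1(\lambda)^Th(\lambda))=\deg N_1(\lambda)+\deg h(\lambda)$. (b) If $\{h_1(\lambda),\dots,h_l(\lambda)\}$ is a right minimal basis of $G(\lambda)$, then $\left\{\begin{bmatrix}N_1(\lambda)^T\\ -\widehat N_2(\lambda)M(\lambda)N_1(\lambda)^T\end{bmatrix}h_j(\lambda)\right\}_{j=1}^l$ is a right minimal basis of $\widehat G(\lambda)$.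
   Context: $\mathbb F$ is an arbitrary field. A polynomial matrix $K\in\mathbb F[\lambda]^{a\times b}$, $a<b$, is a minimal basis if its rows form a minimal basis (polynomial basis of least total degree) of the subspace of $\mathbb F(\lambda)^b$ they span; $K\in\mathbb F[\lambda]^{a_1\times b}$, $N\in\mathbb F[\lambda]^{a_2\times b}$ are dual minimal bases if both are minimal bases, $a_1+a_2=b$ and $KN^T=0$. Strong block minimal bases linearization: write $G=D+C(\lambda I_n-A)^{-1}B$ with $D$ the polynomial part, $\deg D>1$, and $C(\lambda I_n-A)^{-1}B$ a minimal order state-space realization of the strictly proper part ($n$ minimal). Let $K_1\in\mathbb F[\lambda]^{\widehat m\times(m+\widehat m)}$, $K_2\in\mathbb F[\lambda]^{\widehat p\times(p+\widehat p)}$ be minimal bases with all row degrees $1$, $N_1\in\mathbb F[\lambda]^{m\times(m+\widehat m)}$, $N_2\in\mathbb F[\lambda]^{p\times(p+\widehat p)}$ minimal bases dual to $K_1,K_2$ respectively, each with all its row degrees equal, and $M(\lambda)\in\mathbb F[\lambda]^{(p+\widehat p)\times(m+\widehat m)}$ a pencil with $D=N_2MN_1^T$ and $\deg D=\deg N_1+\deg N_2+1$. Let $\widehat K_1\in\mathbb F^{m\times(m+\widehat m)}$, $\widehat K_2\in\mathbb F^{p\times(p+\widehat p)}$, $\widehat N_1\in\mathbb F[\lambda]^{\widehat m\times(m+\widehat m)}$, $\widehat N_2\in\mathbb F[\lambda]^{\widehat p\times(p+\widehat p)}$ be such that $U_i=\begin{bmatrix}K_i\\ \widehat K_i\end{bmatrix}$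 is unimodular with $U_i^{-1}=\begin{bmatrix}\widehat N_i^T & N_i^T\end{bmatrix}$, $i=1,2$. For nonsingular $T,S\in\mathbb F^{n\times n}$, $L(\lambda)=\begin{bmatrix}T(\lambda I_n-A)S & TB\widehat K_1 & 0\\ -\widehat K_2^TCS & M(\lambda) & K_2(\lambda)^T\\ 0 & K_1(\lambda) & 0\end{bmatrix}$. A right minimal basis of a rational matrix $G$ is a polynomial matrix (or set of vectors) whose columns form a minimal basis of $\mathcal N_r(G)=\{x:Gx=0\}$. *)

From HB Require Import structures.
From mathcomp Require Import all_boot all_order all_algebra.
Set Implicit Arguments. Unset Strict Implicit. Unset Printing Implicit Defensive.
Import Order.TTheory GRing.Theory Num.Theory.
Local Open Scope ring_scope.

Section Defs.
Variable F : fieldType.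

Definition ratF := {fraction {poly F}}.
Definition pQ (x : {poly F}) : ratF := FracField.tofrac x.

Definition mxQ a b (A : 'M[{poly F}]_(a, b)) : 'M[ratF]_(a, b) := map_mx pQ A.
Definition mxFP a b (A : 'M[F]_(a, b)) : 'M[{poly F}]_(a, b) := map_mx polyC A.
Definition mxFQ a b (A : 'M[F]_(a, b)) : 'M[ratF]_(a, b) := mxQ (mxFP A).

(* degree of a polynomial (deg 0 := 0) *)
Definition pdeg (q : {poly F}) : nat := (size q).-1.
Definition rowdeg a b (K : 'M[{poly F}]_(a, b)) (i : 'I_a) : nat :=
  \max_(j < b) pdeg (K i j).
Definition pmxdeg a b (K : 'M[{poly F}]_(a, b)) : nat :=
  \max_(i < a) rowdeg K i.
Definition totdeg a b (K : 'M[{poly F}]_(a, b)) : nat :=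
  \sum_(i < a) rowdeg K i.

Definition minimal_basis_of k a b (S : 'M[ratF]_(k, b)) (K : 'M[{poly F}]_(a, b)) :=
  [/\ row_free (mxQ K), (mxQ K :=: S)%MS &
      forall K' : 'M[{poly F}]_(a, b),
        row_free (mxQ K') -> (mxQ K' :=: S)%MS -> (totdeg K <= totdeg K')%N].

Definition minimal_basis a b (K : 'M[{poly F}]_(a, b)) :=
  minimal_basis_of (mxQ K) K.

Definition dual_minimal_bases a1 a2 b (K : 'M[{poly F}]_(a1, b))
  (N : 'M[{poly F}]_(a2, b)) :=
  [/\ minimal_basis K, minimal_basis N, (a1 + a2)%N = b & K *m N^T = 0].

(* right null space N_r(G) = {x : G x = 0}, represented (as a row space of
   transposed vectors) by kermx G^T *)
Definition rnull p m (G : 'M[ratF]_(p, m)) : 'M[ratF]_m := kermx G^T.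

Definition right_minimal_basis p m l (G : 'M[ratF]_(p, m))
  (H : 'M[{poly F}]_(m, l)) := minimal_basis_of (rnull G) H^T.

Definition lamIA n (A : 'M[F]_n) : 'M[ratF]_n :=
  mxQ ('X *: 1%:M - mxFP A).
Definition ssreal n p m (A : 'M[F]_n) (B : 'M[F]_(n, m)) (C : 'M[F]_(p, n))
  : 'M[ratF]_(p, m) := mxFQ C *m invmx (lamIA A) *m mxFQ B.

Definition minimal_realization n p m (A : 'M[F]_n) (B : 'M[F]_(n, m))
  (C : 'M[F]_(p, n)) :=
  forall n' (A' : 'M[F]_n') (B' : 'M[F]_(n', m)) (C' : 'M[F]_(p, n')),
    ssreal A' B' C' = ssreal A B C -> (n <= n')%N.

Definition unimodular_completion a c (K : 'M[{poly F}]_(a, c + a))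
  (Kh : 'M[F]_(c, c + a)) (Nh : 'M[{poly F}]_(a, c + a))
  (N : 'M[{poly F}]_(c, c + a)) :=
  col_mx K (mxFP Kh) *m row_mx Nh^T N^T = 1%:M /\
  row_mx Nh^T N^T *m col_mx K (mxFP Kh) = 1%:M.

Definition Ghat n p m ph mh (A : 'M[F]_n) (B : 'M[F]_(n, m)) (C : 'M[F]_(p, n))
  (M : 'M[{poly F}]_(p + ph, m + mh)) (K1 : 'M[{poly F}]_(mh, m + mh))
  (K2 : 'M[{poly F}]_(ph, p + ph)) (K1h : 'M[F]_(m, m + mh))
  (K2h : 'M[F]_(p, p + ph)) : 'M[ratF]_(p + ph + mh, m + mh + ph) :=
  block_mx (mxQ M + mxFQ K2h^T *m ssreal A B C *m mxFQ K1h) (mxQ K2^T)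
           (mxQ K1) 0.

Definition Zmx p m ph mh (M : 'M[{poly F}]_(p + ph, m + mh))
  (N1 : 'M[{poly F}]_(m, m + mh)) (N2h : 'M[{poly F}]_(ph, p + ph))
  : 'M[{poly F}]_(m + mh + ph, m) :=
  col_mx N1^T (- (N2h *m M *m N1^T)).

End Defs.

From HB Require Import structures.
From mathcomp Require Import all_boot all_order all_algebra zify.
Import GRing.Theory.
Set Implicit Arguments. Unset Strict Implicit. Unset Printing Implicit Defensive.
Local Open Scope ring_scope.

(* The square matrices U_i = [K_i; Khat_i] and U_i^-1 = [Nhat_i^T N_i^T] turn the
   block structure of Ghat into Ghat Z = [Khat_2^T; 0] G for Z = [N_1^T; -Nhat_2 M N_1^T],
   while conversely every x with Ghat x = 0 equals Z y with y = [Khat_1 0] x and G y = 0.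
   As [Khat_1 0] Z = 1, Z maps N_r(G) isomorphically onto N_r(Ghat).
   For degrees: a minimal basis K with all row degrees d has a highest-coefficient
   matrix of full row rank (otherwise a constant unimodular row operation would lower
   its total degree), whence deg (K^T y) = d + deg y.  Applied to N_1 this gives
   deg (N_1^T h) = deg N_1 + deg h.  The lower block of Z h is no larger: with
   w = N_1^T h, K_2^T (Nhat_2 M w) = M w - Khat_2^T D h, where K_2^T raises degrees by
   exactly one, deg (M w) <= deg w + 1, and deg (D h) <= deg h because
   D h = - C (lambda I - A)^-1 B h when G h = 0.  So Z raises degrees by exactly
   deg N_1 on N_r(G) and by at least that much elsewhere, and therefore carries minimal
   bases of N_r(G) to minimal bases of N_r(Ghat). *)

Section RationalImage.
Variable F : fieldType.

Lemma pQ_inj : injective (@pQ F).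
Proof. by move=> x y /eqP; rewrite /pQ tofrac_eq => /eqP. Qed.

Lemma mxQ_inj a b : injective (@mxQ F a b).
Proof.
move=> X Y /matrixP eXY; apply/matrixP=> i j; apply: pQ_inj.
by have := eXY i j; rewrite !mxE.
Qed.

Lemma mxQM a b c (X : 'M[{poly F}]_(a, b)) (Y : 'M_(b, c)) :
  mxQ (X *m Y) = mxQ X *m mxQ Y.
Proof. exact: map_mxM. Qed.

Lemma mxQN a b (X : 'M[{poly F}]_(a, b)) : mxQ (- X) = - mxQ X.
Proof. exact: map_mxN. Qed.

Lemma mxQ0 a b : mxQ (0 : 'M[{poly F}]_(a, b)) = 0.
Proof. exact: map_mx0. Qed.

Lemma mxQ1 a : mxQ (1%:M : 'M[{poly F}]_a) = 1%:M.
Proof. exact: map_mx1. Qed.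

Lemma mxQZ a b (c : {poly F}) (X : 'M[{poly F}]_(a, b)) : mxQ (c *: X) = pQ c *: mxQ X.
Proof. exact: map_mxZ. Qed.

Lemma mxQT a b (X : 'M[{poly F}]_(a, b)) : mxQ X^T = (mxQ X)^T.
Proof. by rewrite /mxQ map_trmx. Qed.

Lemma mxQ_row a b (X : 'M[{poly F}]_(a, b)) i : mxQ (row i X) = row i (mxQ X).
Proof. exact: map_row. Qed.

Lemma mxQ_col_mx a1 a2 b (X : 'M[{poly F}]_(a1, b)) (Y : 'M_(a2, b)) :
  mxQ (col_mx X Y) = col_mx (mxQ X) (mxQ Y).
Proof. exact: map_col_mx. Qed.

Lemma mxQ_row_mx a b1 b2 (X : 'M[{poly F}]_(a, b1)) (Y : 'M_(a, b2)) :
  mxQ (row_mx X Y) = row_mx (mxQ X) (mxQ Y).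
Proof. exact: map_row_mx. Qed.

Lemma mxFQT a b (X : 'M[F]_(a, b)) : mxFQ X^T = (mxFQ X)^T.
Proof. by rewrite /mxFQ /mxFP -map_trmx mxQT. Qed.

Lemma mxQ_det a (X : 'M[{poly F}]_a) : \det (mxQ X) = pQ (\det X).
Proof. exact: det_map_mx. Qed.

Lemma mxQ_adj a (X : 'M[{poly F}]_a) : \adj (mxQ X) = mxQ (\adj X).
Proof. exact/esym/map_mx_adj. Qed.

Lemma mxFQ_unit a (P : 'M[F]_a) : P \in unitmx -> mxFQ P \in unitmx.
Proof.
rewrite !unitmxE /mxFQ mxQ_det /mxFP det_map_mx !unitfE.
by rewrite /pQ tofrac_eq0 polyC_eq0.
Qed.

Lemma row_free_mxQ_row a b (X : 'M[{poly F}]_(a, b)) i :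
  row_free (mxQ X) -> (row i X)^T != 0.
Proof.
move=> fX; have : row i (mxQ X) != 0.
  rewrite rowE mulmx_free_eq0 //; apply/eqP => /matrixP/(_ 0 i)/eqP.
  by rewrite !mxE !eqxx oner_eq0.
by apply: contra => /eqP Xi0; rewrite -mxQ_row -[row i X]trmxK Xi0 trmx0 mxQ0.
Qed.

End RationalImage.

Section PolyDegree.
Variable F : fieldType.
Implicit Types p q : {poly F}.

Lemma pdeg_le p k : (pdeg p <= k)%N = (size p <= k.+1)%N.
Proof. by rewrite /pdeg; case: (size p). Qed.

Lemma pdeg0 : pdeg (0 : {poly F}) = 0%N.
Proof. by rewrite /pdeg size_poly0. Qed.

Lemma pdegN p : pdeg (- p) = pdeg p.
Proof. by rewrite /pdeg size_polyN. Qed.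

Lemma pdegC (c : F) : pdeg c%:P = 0%N.
Proof. by rewrite /pdeg size_polyC; case: (c != 0). Qed.

Lemma pdegD p q k : (pdeg p <= k)%N -> (pdeg q <= k)%N -> (pdeg (p + q) <= k)%N.
Proof.
rewrite !pdeg_le => hp hq; apply: leq_trans (size_polyD _ _) _.
by rewrite geq_max hp hq.
Qed.

Lemma pdeg_Msign b p : pdeg ((-1) ^+ b * p) = pdeg p.
Proof. by rewrite /pdeg size_Msign. Qed.

Lemma pdegM_eq p q : p != 0 -> q != 0 -> pdeg (p * q) = (pdeg p + pdeg q)%N.
Proof.
move=> p0 q0; rewrite /pdeg size_mul //.
move: (size_poly_gt0 p) (size_poly_gt0 q); rewrite p0 q0.
by case: (size p) => // a; case: (size q) => // b; rewrite addnS.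
Qed.

Lemma pdegM p q : (pdeg (p * q) <= pdeg p + pdeg q)%N.
Proof.
have [->|p0] := eqVneq p 0; first by rewrite mul0r pdeg0.
have [->|q0] := eqVneq q 0; first by rewrite mulr0 pdeg0.
by rewrite pdegM_eq.
Qed.

Lemma pdeg_sum (I : finType) (P : pred I) (f : I -> {poly F}) k :
  (forall i, P i -> pdeg (f i) <= k)%N -> (pdeg (\sum_(i | P i) f i) <= k)%N.
Proof.
move=> hf; elim/big_rec: _ => [|i x Pi hx]; first by rewrite pdeg0.
exact: pdegD (hf _ Pi) hx.
Qed.

Lemma pdeg_prod (I : finType) (f : I -> {poly F}) :
  (pdeg (\prod_i f i) <= \sum_i pdeg (f i))%N.
Proof.
elim/big_rec2: _ => [|i x y _ hxy]; first by rewrite /pdeg size_poly1.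
exact: leq_trans (pdegM _ _) (leq_add (leqnn _) hxy).
Qed.

Lemma rowdeg_leP a b (X : 'M[{poly F}]_(a, b)) i k :
  reflect (forall j, pdeg (X i j) <= k)%N (rowdeg X i <= k)%N.
Proof.
by apply: (iffP (@bigmax_leqP _ xpredT k (fun j => pdeg (X i j)))) => h j //; apply: h.
Qed.

Lemma rowdeg_ge a b (X : 'M[{poly F}]_(a, b)) i j : (pdeg (X i j) <= rowdeg X i)%N.
Proof. exact/rowdeg_leP. Qed.

Lemma pmxdeg_leP a b (X : 'M[{poly F}]_(a, b)) k :
  reflect (forall i j, pdeg (X i j) <= k)%N (pmxdeg X <= k)%N.
Proof.
apply: (iffP (@bigmax_leqP _ xpredT k (rowdeg X))) => h i.
  by move=> j; apply/rowdeg_leP/h.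
by move=> _; apply/rowdeg_leP/h.
Qed.

Lemma pmxdeg_ge a b (X : 'M[{poly F}]_(a, b)) i j : (pdeg (X i j) <= pmxdeg X)%N.
Proof. exact/pmxdeg_leP. Qed.

Lemma rowdeg_le_pmxdeg a b (X : 'M[{poly F}]_(a, b)) i : (rowdeg X i <= pmxdeg X)%N.
Proof. by apply/rowdeg_leP => j; apply: pmxdeg_ge. Qed.

Lemma pmxdeg_rowdeg_const a b (X : 'M[{poly F}]_(a, b)) d (i0 : 'I_a) :
  (forall i, rowdeg X i = d) -> pmxdeg X = d.
Proof.
move=> hd; apply/eqP; rewrite eqn_leq -{2}(hd i0) rowdeg_le_pmxdeg andbT.
by apply/pmxdeg_leP => i j; rewrite -(hd i) rowdeg_ge.
Qed.

Lemma pmxdeg0 a b : pmxdeg (0 : 'M[{poly F}]_(a, b)) = 0%N.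
Proof. by apply/eqP; rewrite -leqn0; apply/pmxdeg_leP => i j; rewrite mxE pdeg0. Qed.

Lemma pmxdegD a b (X Y : 'M[{poly F}]_(a, b)) k :
  (pmxdeg X <= k)%N -> (pmxdeg Y <= k)%N -> (pmxdeg (X + Y) <= k)%N.
Proof.
move=> /pmxdeg_leP hX /pmxdeg_leP hY; apply/pmxdeg_leP => i j.
by rewrite mxE; apply: pdegD.
Qed.

Lemma pmxdegN a b (X : 'M[{poly F}]_(a, b)) : pmxdeg (- X) = pmxdeg X.
Proof.
have le (Y : 'M[{poly F}]_(a, b)) : (pmxdeg (- Y) <= pmxdeg Y)%N.
  by apply/pmxdeg_leP => i j; rewrite mxE pdegN pmxdeg_ge.
by apply/eqP; rewrite eqn_leq le -{1}[X]opprK le.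
Qed.

Lemma rowdegE a b (X : 'M[{poly F}]_(a, b)) i : rowdeg X i = pmxdeg (row i X)^T.
Proof.
apply/eqP; rewrite eqn_leq; apply/andP; split.
  by apply/rowdeg_leP => j; have := pmxdeg_ge (row i X)^T j 0; rewrite !mxE.
by apply/pmxdeg_leP => j k; rewrite !mxE rowdeg_ge.
Qed.

Lemma pmxdeg_tr a b (X : 'M[{poly F}]_(a, b)) : pmxdeg X^T = pmxdeg X.
Proof.
have le c d (Y : 'M[{poly F}]_(c, d)) : (pmxdeg Y^T <= pmxdeg Y)%N.
  by apply/pmxdeg_leP => i j; rewrite mxE pmxdeg_ge.
by apply/eqP; rewrite eqn_leq le -{1}[X]trmxK le.
Qed.

Lemma pmxdegM a b c (X : 'M[{poly F}]_(a, b)) (Y : 'M_(b, c)) :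
  (pmxdeg (X *m Y) <= pmxdeg X + pmxdeg Y)%N.
Proof.
apply/pmxdeg_leP => i j; rewrite mxE; apply: pdeg_sum => k _.
exact: leq_trans (pdegM _ _) (leq_add (pmxdeg_ge _ _ _) (pmxdeg_ge _ _ _)).
Qed.

Lemma pmxdegFP a b (X : 'M[F]_(a, b)) : pmxdeg (mxFP X) = 0%N.
Proof. by apply/eqP; rewrite -leqn0; apply/pmxdeg_leP => i j; rewrite mxE pdegC. Qed.

Lemma pmxdeg_col_mx a1 a2 b (X : 'M[{poly F}]_(a1, b)) (Y : 'M_(a2, b)) :
  pmxdeg (col_mx X Y) = maxn (pmxdeg X) (pmxdeg Y).
Proof.
apply/eqP; rewrite eqn_leq geq_max; apply/and3P; split.
- apply/pmxdeg_leP => i j; rewrite mxE; case: splitP => k _.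
    exact: leq_trans (pmxdeg_ge _ _ _) (leq_maxl _ _).
  exact: leq_trans (pmxdeg_ge _ _ _) (leq_maxr _ _).
- by apply/pmxdeg_leP => i j; rewrite -(col_mxEu X Y) pmxdeg_ge.
- by apply/pmxdeg_leP => i j; rewrite -(col_mxEd X Y) pmxdeg_ge.
Qed.

Lemma pdeg_det a k (X : 'M[{poly F}]_a) :
  (pmxdeg X <= k)%N -> (pdeg (\det X) <= a * k)%N.
Proof.
move=> /pmxdeg_leP hX; apply: pdeg_sum => s _; rewrite pdeg_Msign.
apply: leq_trans (pdeg_prod _) _; rewrite -[X in (_ <= X * k)%N]card_ord -sum_nat_const.
by apply: leq_sum => i _; apply: hX.
Qed.

End PolyDegree.

Section CoefficientMatrix.
Variable F : fieldType.
Implicit Types p q : {poly F}.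

Lemma coefM_top p q d e : (size p <= d.+1)%N -> (size q <= e.+1)%N ->
  (p * q)`_(d + e) = p`_d * q`_e.
Proof.
move=> hp hq; rewrite coefM (bigD1 (@Ordinal (d + e).+1 d (leq_addr e d))) //=.
have -> : (d + e - d)%N = e by rewrite addKn.
rewrite big1 ?addr0 // => -[k hk]; rewrite -val_eqE /= => kd.
have [ltkd|ltdk] := ltnP k d.
  by rewrite [q`__]nth_default ?mulr0 //; apply: leq_trans hq _; lia.
by rewrite [p`__]nth_default ?mul0r //; apply: leq_trans hp _; rewrite ltn_neqAle eq_sym kd.
Qed.

Definition coefmx a b k (X : 'M[{poly F}]_(a, b)) : 'M[F]_(a, b) :=
  \matrix_(i, j) (X i j)`_k.

Lemma coefmx_tr a b k (X : 'M[{poly F}]_(a, b)) : coefmx k X^T = (coefmx k X)^T.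
Proof. by apply/matrixP => i j; rewrite !mxE. Qed.

Lemma coefmx0_FP a b (X : 'M[F]_(a, b)) : coefmx 0 (mxFP X) = X.
Proof. by apply/matrixP => i j; rewrite !mxE coefC. Qed.

Lemma coefmx_mul a b c d e (X : 'M[{poly F}]_(a, b)) (Y : 'M_(b, c)) :
  (pmxdeg X <= d)%N -> (pmxdeg Y <= e)%N ->
  coefmx (d + e) (X *m Y) = coefmx d X *m coefmx e Y.
Proof.
move=> /pmxdeg_leP hX /pmxdeg_leP hY; apply/matrixP => i j.
rewrite !mxE coef_sum; apply: eq_bigr => k _.
by rewrite !mxE coefM_top // -pdeg_le.
Qed.

Lemma coefmx_eq0 a b k (X : 'M[{poly F}]_(a, b)) :
  (pmxdeg X < k)%N -> coefmx k X = 0.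
Proof.
move=> hk; apply/matrixP => i j; rewrite !mxE nth_default //.
by apply: leq_trans hk; rewrite -pdeg_le pmxdeg_ge.
Qed.

Lemma size_coefmx_eq0 a b d (X : 'M[{poly F}]_(a, b)) :
  (pmxdeg X <= d)%N -> coefmx d X = 0 -> forall i j, (size (X i j) <= d)%N.
Proof.
move=> /pmxdeg_leP hX /matrixP top0 i j; apply/leq_sizeP => k.
rewrite leq_eqVlt => /orP[/eqP <-|]; first by have := top0 i j; rewrite !mxE.
by move: (hX i j); rewrite pdeg_le => /leq_sizeP; apply.
Qed.

Lemma coefmx_pmxdeg_eq0 a b (X : 'M[{poly F}]_(a, b)) :
  coefmx (pmxdeg X) X = 0 -> X = 0.
Proof.
move=> /(size_coefmx_eq0 (leqnn _)); case e: (pmxdeg X) => [|e'] hs.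
  by apply/matrixP => i j; rewrite mxE; apply/eqP; rewrite -size_poly_eq0 -leqn0.
have : (pmxdeg X <= e')%N by apply/pmxdeg_leP => i j; rewrite pdeg_le.
by rewrite e ltnn.
Qed.

End CoefficientMatrix.

Section PredictableDegree.
Variable F : fieldType.

Lemma minimal_basis_mulmx_unit a b (K : 'M[{poly F}]_(a, b)) (P : 'M[F]_a) :
  minimal_basis K -> P \in unitmx ->
  row_free (mxQ (mxFP P *m K)) /\ (totdeg K <= totdeg (mxFP P *m K))%N.
Proof.
case=> fK _ minK Pu.
have eqPK : (mxQ (mxFP P *m K) :=: mxQ K)%MS.
  by rewrite mxQM; apply: eqmxMfull; rewrite row_full_unit; apply: mxFQ_unit.
have fPK : row_free (mxQ (mxFP P *m K)) by rewrite /row_free eqPK.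
by split; last exact: minK.
Qed.

Lemma unitmx_replace_row a (c : 'rV[F]_a) i0 : c 0 i0 != 0 ->
  \matrix_(i, j) (if i == i0 then c 0 j else (i == j)%:R) \in unitmx.
Proof.
set P := \matrix_(i, j) _ => ci0; rewrite -row_free_unit; apply: inj_row_free => v vP0.
have vP j : (v *m P) 0 j = v 0 i0 * c 0 j + (if j == i0 then 0 else v 0 j).
  rewrite mxE (bigD1 i0) //= mxE eqxx; congr (_ + _).
  have Pk k l : k != i0 -> P k l = (k == l)%:R by move=> ki0; rewrite mxE (negPf ki0).
  case: eqP => [->|/eqP ji0].
    by rewrite big1 // => k ki0; rewrite Pk // (negPf ki0) mulr0.
  rewrite (bigD1 j) ?(eq_sym i0) //= Pk // eqxx mulr1 big1 ?addr0 // => k /andP[ki0 kj].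
  by rewrite Pk // (negPf kj) mulr0.
have vi0 : v 0 i0 = 0.
  have := vP i0; rewrite vP0 mxE eqxx addr0 => /esym/eqP.
  by rewrite mulf_eq0 (negPf ci0) orbF => /eqP.
apply/rowP => j; have := vP j; rewrite vP0 vi0 mul0r add0r !mxE.
by case: eqP => [->|_ <-].
Qed.

Lemma minimal_basis_coefmx_inj a b d (K : 'M[{poly F}]_(a, b)) :
  minimal_basis K -> (forall i, rowdeg K i = d) ->
  forall c : 'rV[F]_a, c *m coefmx d K = 0 -> c = 0.
Proof.
move=> Kmin hd c cK0; have [//|/rV0Pn[i0 ci0]] := eqVneq c 0; exfalso.
(* Replacing row i0 of K by c *m K is a constant unimodular change of basis, and
   c *m coefmx d K = 0 pushes the degree of the new row below d. *)
set K' := mxFP (\matrix_(i, j) (if i == i0 then c 0 j else (i == j)%:R)) *m K.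
have [fK' leK] : row_free (mxQ K') /\ (totdeg K <= totdeg K')%N.
  exact: minimal_basis_mulmx_unit Kmin (unitmx_replace_row ci0).
have K'E i j : K' i j = if i == i0 then (mxFP c *m K) 0 j else K i j.
  rewrite !mxE; case: eqP => [->|/eqP ii0]; first by apply: eq_bigr => k _; rewrite !mxE eqxx.
  rewrite (bigD1 i) //= big1 ?addr0; first by rewrite !mxE (negPf ii0) eqxx mul1r.
  by move=> k ki; rewrite !mxE (negPf ii0) eq_sym (negPf ki) mul0r.
have degK : (pmxdeg K <= d)%N by apply/pmxdeg_leP => i j; rewrite -(hd i) rowdeg_ge.
have low_row j : (size (K' i0 j) <= d)%N.
  rewrite K'E eqxx; apply: size_coefmx_eq0.
    by apply: leq_trans (pmxdegM _ _) _; rewrite pmxdegFP.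
  by rewrite -[d]add0n coefmx_mul ?pmxdegFP // coefmx0_FP.
case: d hd {degK cK0} low_row => [|d] hd low_row.
  case/negP: (row_free_mxQ_row i0 fK'); apply/eqP/matrixP => j k.
  by rewrite 2![LHS]mxE [RHS]mxE; apply/eqP; rewrite -size_poly_eq0 -leqn0 low_row.
move: leK; apply/negP; rewrite -ltnNge /totdeg (bigD1 i0) //= [X in (_ < X)%N](bigD1 i0) //=.
rewrite (eq_bigr (rowdeg K)) ?ltn_add2r ?hd; first by apply/rowdeg_leP => j; rewrite pdeg_le.
by move=> i ii0; apply: eq_bigr => j _; rewrite K'E (negPf ii0).
Qed.

Lemma pmxdeg_minimal_basis_mul a b d (K : 'M[{poly F}]_(a, b)) :
  minimal_basis K -> (forall i, rowdeg K i = d) ->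
  forall y : 'cV_a, y != 0 -> pmxdeg (K^T *m y) = (d + pmxdeg y)%N.
Proof.
move=> Kmin hd y y0.
have degK : (pmxdeg K^T <= d)%N.
  by rewrite pmxdeg_tr; apply/pmxdeg_leP => i j; rewrite -(hd i) rowdeg_ge.
apply/eqP; rewrite eqn_leq; apply/andP; split.
  by apply: leq_trans (pmxdegM _ _) _; rewrite leq_add2r.
rewrite leqNgt; apply: contra y0 => hlt; apply/eqP/coefmx_pmxdeg_eq0.
have := coefmx_mul degK (leqnn (pmxdeg y)); rewrite coefmx_eq0 // coefmx_tr.
move=> /(congr1 trmx); rewrite trmx0 trmx_mul trmxK => /esym.
by move=> /(minimal_basis_coefmx_inj Kmin hd) /(congr1 trmx); rewrite trmxK trmx0.
Qed.

End PredictableDegree.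

Section StrictlyProperPart.
Variables (F : fieldType) (n : nat) (A : 'M[F]_n).

Lemma pmxdeg_char_poly_mx : (pmxdeg (char_poly_mx A) <= 1)%N.
Proof.
apply/pmxdeg_leP => i j; rewrite !mxE; case: eqP => _.
  by rewrite mulr1n pdeg_le size_XsubC.
by rewrite mulr0n sub0r pdegN pdegC.
Qed.

Lemma pmxdeg_adj_char_poly_mx : (pmxdeg (\adj (char_poly_mx A)) <= n.-1)%N.
Proof.
apply/pmxdeg_leP => i j; rewrite mxE /cofactor pdeg_Msign.
rewrite -[X in (_ <= X)%N]muln1; apply: pdeg_det; apply/pmxdeg_leP => k l.
by apply: leq_trans pmxdeg_char_poly_mx; rewrite 2!mxE pmxdeg_ge.
Qed.

Lemma invmx_lamIA :
  invmx (lamIA A) = (pQ (char_poly A))^-1 *: mxQ (\adj (char_poly_mx A)).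
Proof.
have unit_lamIA : lamIA A \in unitmx.
  rewrite unitmxE unitfE /lamIA scalemx1 mxQ_det /pQ tofrac_eq0.
  exact/monic_neq0/char_poly_monic.
by rewrite /invmx unit_lamIA /lamIA scalemx1 mxQ_det mxQ_adj.
Qed.

Lemma pmxdeg_null_polypart p m (B : 'M[F]_(n, m)) (C : 'M[F]_(p, n))
    (D : 'M[{poly F}]_(p, m)) (h : 'cV_m) :
  (mxQ D + ssreal A B C) *m mxQ h = 0 -> (pmxdeg (D *m h) <= pmxdeg h)%N.
Proof.
(* chi (D h) = - C adj(lambda I - A) B h, and deg chi = n exceeds deg adj by one. *)
move=> null_h; set Q := mxFP C *m \adj (char_poly_mx A) *m mxFP B *m h.
have chi0 : char_poly A != 0 by apply/monic_neq0/char_poly_monic.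
have pchi0 : pQ (char_poly A) != 0 by rewrite /pQ tofrac_eq0.
have Dh : char_poly A *: (D *m h) = - Q.
  apply: mxQ_inj; rewrite mxQZ mxQN mxQM.
  move/eqP: null_h; rewrite mulmxDl addr_eq0 => /eqP ->.
  rewrite /ssreal invmx_lamIA /Q !mxQM -scalemxAr -!scalemxAl scalerN scalerA.
  by rewrite mulfV // scale1r.
have degQ : (pmxdeg Q <= n.-1 + pmxdeg h)%N.
  apply: leq_trans (pmxdegM _ _) _; rewrite leq_add2r.
  apply: leq_trans (pmxdegM _ _) _; rewrite pmxdegFP addn0.
  apply: leq_trans (pmxdegM _ _) _; rewrite pmxdegFP add0n.
  exact: pmxdeg_adj_char_poly_mx.
apply/pmxdeg_leP => i j; have [->|x0] := eqVneq ((D *m h) i j) 0; first by rewrite pdeg0.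
have := leq_trans (pmxdeg_ge Q i j) degQ.
rewrite -[Q]opprK -Dh 2!mxE pdegN pdegM_eq // [pdeg (char_poly A)]/pdeg size_char_poly /=.
by move: (pdeg _) (pmxdeg h) => x e; lia.
Qed.

End StrictlyProperPart.

Section CompletionIdentities.
Variables (R : comPzRingType) (a c : nat).
Variables (K : 'M[R]_(a, c + a)) (Kh : 'M[R]_(c, c + a)).
Variables (Nh : 'M[R]_(a, c + a)) (N : 'M[R]_(c, c + a)).
Hypothesis UV : col_mx K Kh *m row_mx Nh^T N^T = 1%:M.
Hypothesis VU : row_mx Nh^T N^T *m col_mx K Kh = 1%:M.

Lemma completion_blocks :
  [/\ K *m Nh^T = 1%:M, K *m N^T = 0, Kh *m Nh^T = 0 & Kh *m N^T = 1%:M].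
Proof. by move: UV; rewrite mul_col_row scalar_mx_block => /eq_block_mx. Qed.

Lemma completion_sum : Nh^T *m K + N^T *m Kh = 1%:M.
Proof. by rewrite -mul_row_col. Qed.

Lemma completion_sum_tr : K^T *m Nh + Kh^T *m N = 1%:M.
Proof.
apply: (can_inj (@trmxK _ _ _)).
by rewrite linearD /= !trmx_mul !trmxK completion_sum trmx1.
Qed.

End CompletionIdentities.

Lemma unimodular_completionQ (F : fieldType) a c (K : 'M[{poly F}]_(a, c + a))
    (Kh : 'M[F]_(c, c + a)) (Nh : 'M[{poly F}]_(a, c + a)) (N : 'M_(c, c + a)) :
  unimodular_completion K Kh Nh N ->
  col_mx (mxQ K) (mxFQ Kh) *m row_mx (mxQ Nh)^T (mxQ N)^T = 1%:M /\
  row_mx (mxQ Nh)^T (mxQ N)^T *m col_mx (mxQ K) (mxFQ Kh) = 1%:M.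
Proof.
by case=> UV VU; split; [move: (congr1 (@mxQ F _ _) UV) | move: (congr1 (@mxQ F _ _) VU)];
  rewrite mxQM mxQ_col_mx mxQ_row_mx !mxQT mxQ1.
Qed.

Section LinearizationBlocks.
Variables (R : comPzRingType) (p m ph mh : nat).
Variables (M : 'M[R]_(p + ph, m + mh)) (Rsp : 'M[R]_(p, m)).
Variables (K1 : 'M[R]_(mh, m + mh)) (K1h : 'M[R]_(m, m + mh)).
Variables (N1h : 'M[R]_(mh, m + mh)) (N1 : 'M[R]_(m, m + mh)).
Variables (K2 : 'M[R]_(ph, p + ph)) (K2h : 'M[R]_(p, p + ph)).
Variables (N2h : 'M[R]_(ph, p + ph)) (N2 : 'M[R]_(p, p + ph)).
Hypothesis UV1 : col_mx K1 K1h *m row_mx N1h^T N1^T = 1%:M.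
Hypothesis VU1 : row_mx N1h^T N1^T *m col_mx K1 K1h = 1%:M.
Hypothesis UV2 : col_mx K2 K2h *m row_mx N2h^T N2^T = 1%:M.
Hypothesis VU2 : row_mx N2h^T N2^T *m col_mx K2 K2h = 1%:M.

(* Ghat, Zmx and [Khat_1 0] over an arbitrary commutative ring, with Rsp standing
   for the strictly proper part C (lambda I - A)^-1 B. *)
Definition blockGhat : 'M[R]_(p + ph + mh, m + mh + ph) :=
  block_mx (M + K2h^T *m Rsp *m K1h) K2^T K1 0.
Definition blockZ : 'M[R]_(m + mh + ph, m) := col_mx N1^T (- (N2h *m M *m N1^T)).
Definition blockZinv : 'M[R]_(m, m + mh + ph) := row_mx K1h 0.

Lemma blockZinvK : blockZinv *m blockZ = 1%:M.
Proof.
have [_ _ _ K1hN1] := completion_blocks UV1.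
by rewrite mul_row_col mul0mx addr0 K1hN1.
Qed.

Lemma blockGhat_Z :
  blockGhat *m blockZ = col_mx K2h^T 0 *m (N2 *m M *m N1^T + Rsp).
Proof.
have [_ K1N1 _ K1hN1] := completion_blocks UV1.
have K2N2h : K2^T *m N2h = 1%:M - K2h^T *m N2 by rewrite -(completion_sum_tr VU2) addrK.
rewrite mul_block_col mul0mx addr0 K1N1 mul_col_mx mul0mx; congr col_mx.
rewrite mulmxDl -!mulmxA K1hN1 mulmx1 mulmxN !mulmxA K2N2h mulmxBl mul1mx.
by rewrite mulmxBl mulmxDr !mulmxA opprB [LHS]addrC addrA addrNK.
Qed.

Lemma blockGhat_kernel k (X : 'M[R]_(m + mh + ph, k)) :
  blockGhat *m X = 0 ->
  X = blockZ *m (blockZinv *m X) /\ (N2 *m M *m N1^T + Rsp) *m (blockZinv *m X) = 0.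
Proof.
have [K2N2h K2N2 K2hN2h K2hN2] := completion_blocks UV2.
move: (congr1 trmx K2N2h) (congr1 trmx K2N2) (congr1 trmx K2hN2h) (congr1 trmx K2hN2).
rewrite !trmx_mul !trmxK !trmx1 !trmx0 => N2hK2 N2K2 N2hK2h N2K2h.
rewrite -[X]vsubmxK mul_block_col mul0mx addr0 -col_mx0 => /eq_col_mx[top bot].
have X1E : usubmx X = N1^T *m (K1h *m usubmx X).
  by rewrite mulmxA -[LHS]mul1mx -(completion_sum VU1) mulmxDl -mulmxA bot mulmx0 add0r.
rewrite mul_row_col mul0mx addr0; rewrite !mulmxDl in top.
have t2 := congr1 (mulmx N2) top; have t3 := congr1 (mulmx N2h) top.
rewrite mulmx0 !mulmxDr !mulmxA N2K2 N2K2h mul0mx mul1mx addr0 in t2.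
rewrite mulmx0 !mulmxDr !mulmxA N2hK2 N2hK2h !mul0mx mul1mx addr0 in t3.
split; last by rewrite mulmxDl -!mulmxA -X1E !mulmxA t2.
rewrite mul_col_mx -X1E mulNmx -!mulmxA -X1E !mulmxA; congr col_mx.
by apply/eqP; rewrite -addr_eq0 addrC t3.
Qed.

End LinearizationBlocks.

Lemma kermx_tr_factor (R : fieldType) p m q s (G : 'M[R]_(p, m))
    (Gh : 'M_(q, s)) (Z : 'M_(s, m)) (P : 'M_(m, s)) (E : 'M_(q, p)) :
  Gh *m Z = E *m G ->
  (forall k (X : 'M_(s, k)), Gh *m X = 0 -> X = Z *m (P *m X) /\ G *m (P *m X) = 0) ->
  (kermx Gh^T :=: kermx G^T *m Z^T)%MS.
Proof.
move=> GhZ kerGh; apply/eqmxP/andP; split; last first.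
  by apply/sub_kermxP; rewrite -mulmxA -trmx_mul GhZ trmx_mul mulmxA mulmx_ker mul0mx.
have GhK : Gh *m (kermx Gh^T)^T = 0.
  by apply: (can_inj (@trmxK _ _ _)); rewrite trmx_mul trmxK mulmx_ker trmx0.
have [KE GK] := kerGh _ _ GhK.
rewrite -[kermx Gh^T]trmxK {1}KE trmx_mul submxMr //; apply/sub_kermxP.
by rewrite -trmx_mul GK trmx0.
Qed.

Section RightMinimalBasisTransfer.
Variables (F : fieldType) (p m q s d : nat).
Variables (G : 'M[ratF F]_(p, m)) (Gh : 'M[ratF F]_(q, s)).
Variables (Z : 'M[{poly F}]_(s, m)) (P : 'M[{poly F}]_(m, s)).
Hypothesis PZ : P *m Z = 1%:M.
Hypothesis rnullGh : (rnull Gh :=: rnull G *m (mxQ Z)^T)%MS.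
Hypothesis pmxdeg_Z_ge : forall h : 'cV_m, h != 0 -> (d + pmxdeg h <= pmxdeg (Z *m h))%N.
Hypothesis pmxdeg_Z_null :
  forall h : 'cV_m, G *m mxQ h = 0 -> (pmxdeg (Z *m h) <= d + pmxdeg h)%N.

Lemma rowdeg_mul_tr a (X : 'M[{poly F}]_(a, m)) j :
  rowdeg (X *m Z^T) j = pmxdeg (Z *m (row j X)^T).
Proof. by rewrite rowdegE row_mul trmx_mul trmxK. Qed.

Lemma right_minimal_basis_mul l (H : 'M[{poly F}]_(m, l)) :
  right_minimal_basis G H -> right_minimal_basis Gh (Z *m H).
Proof.
case=> fH eqH minH.
have ZPt : (mxQ Z)^T *m (mxQ P)^T = 1%:M by rewrite -trmx_mul -mxQM PZ mxQ1 trmx1.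
have ZHE : mxQ (Z *m H)^T = mxQ H^T *m (mxQ Z)^T by rewrite trmx_mul mxQM !mxQT.
have eqHZ := eqmx_trans (eqmxMr (mxQ Z)^T eqH) (eqmx_sym rnullGh).
rewrite /right_minimal_basis /minimal_basis_of ZHE; split=> // [|K' fK' eqK'].
  by rewrite /row_free mxrankMfree //; apply/row_freeP; exists (mxQ P)^T.
set H' := K' *m P^T.
have /submxP[Y K'E] : (mxQ K' <= rnull G *m (mxQ Z)^T)%MS by rewrite -rnullGh eqK'.
have {}K'E : K' = H' *m Z^T.
  apply: mxQ_inj; rewrite !mxQM !mxQT mulmxA in K'E *.
  by rewrite K'E -(mulmxA (Y *m _)) ZPt mulmx1.
have eqH' : (mxQ H' :=: rnull G)%MS.
  have := eqmxMr (mxQ P)^T (eqmx_trans eqK' rnullGh).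
  by rewrite -mulmxA ZPt mulmx1 -mxQT -mxQM.
have fH' : row_free (mxQ H').
  rewrite -row_leq_rank; apply: leq_trans (mxrankM_maxl _ (mxQ Z)^T).
  by rewrite -mxQT -mxQM -K'E row_leq_rank.
have H_null j : G *m mxQ (row j H^T)^T = 0.
  have /sub_kermxP HG : (mxQ H^T <= rnull G)%MS by rewrite eqH.
  apply: (can_inj (@trmxK _ _ _)).
  by rewrite trmx0 trmx_mul mxQT trmxK mxQ_row -row_mul HG row0.
have deg_ZH j : (rowdeg (Z *m H)^T j <= d + rowdeg H^T j)%N.
  by rewrite trmx_mul rowdeg_mul_tr rowdegE; apply: pmxdeg_Z_null.
have deg_K' j : (d + rowdeg H' j <= rowdeg K' j)%N.
  by rewrite K'E rowdeg_mul_tr rowdegE; apply/pmxdeg_Z_ge/row_free_mxQ_row.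
apply: (@leq_trans (\sum_(j < l) (d + rowdeg H^T j))).
  by apply: leq_sum => j _; apply: deg_ZH.
apply: (@leq_trans (\sum_(j < l) (d + rowdeg H' j))); last first.
  by apply: leq_sum => j _; apply: deg_K'.
by rewrite !big_split leq_add2l; apply: minH.
Qed.
End RightMinimalBasisTransfer.

Lemma pmxdeg_Zmx_ge (F : fieldType) p m ph mh d (M : 'M[{poly F}]_(p + ph, m + mh))
    (N1 : 'M[{poly F}]_(m, m + mh)) (N2h : 'M[{poly F}]_(ph, p + ph)) (h : 'cV_m) :
  minimal_basis N1 -> (forall i, rowdeg N1 i = d) -> h != 0 ->
  (d + pmxdeg h <= pmxdeg (Zmx M N1 N2h *m h))%N.
Proof.
move=> N1min N1deg h0; rewrite mul_col_mx pmxdeg_col_mx.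
by rewrite -(pmxdeg_minimal_basis_mul N1min N1deg h0) leq_maxl.
Qed.

Section DualBasisDegree.
Variables (F : fieldType) (p ph : nat).
Variables (K2 : 'M[{poly F}]_(ph, p + ph)) (K2h : 'M[F]_(p, p + ph)).
Variables (N2h : 'M[{poly F}]_(ph, p + ph)) (N2 : 'M[{poly F}]_(p, p + ph)).
Hypothesis K2min : minimal_basis K2.
Hypothesis K2deg : forall i, rowdeg K2 i = 1%N.
Hypothesis dual2 : K2^T *m N2h + (mxFP K2h)^T *m N2 = 1%:M.

Lemma pmxdeg_Nhat_mul k (v : 'cV_(p + ph)) :
  (pmxdeg v <= k.+1)%N -> (pmxdeg (N2 *m v) <= k.+1)%N -> (pmxdeg (N2h *m v) <= k)%N.
Proof.
move=> degv degN2v; have [->|y0] := eqVneq (N2h *m v) 0; first by rewrite pmxdeg0.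
rewrite -(leq_add2l 1) -(pmxdeg_minimal_basis_mul K2min K2deg y0) add1n.
have -> : K2^T *m (N2h *m v) = v - (mxFP K2h)^T *m (N2 *m v).
  by rewrite -{2}[v]mul1mx -dual2 mulmxDl !mulmxA addrK.
apply: pmxdegD; rewrite ?pmxdegN //.
by apply: leq_trans (pmxdegM _ _) _; rewrite pmxdeg_tr pmxdegFP.
Qed.

End DualBasisDegree.

Section StrongLinearization.
Variables (F : fieldType) (p m n ph mh : nat).
Variables (G : 'M[ratF F]_(p, m)) (D : 'M[{poly F}]_(p, m)).
Variables (A : 'M[F]_n) (B : 'M[F]_(n, m)) (C : 'M[F]_(p, n)).
Variables (K1 : 'M[{poly F}]_(mh, m + mh)) (K2 : 'M[{poly F}]_(ph, p + ph)).
Variables (N1 : 'M[{poly F}]_(m, m + mh)) (N2 : 'M[{poly F}]_(p, p + ph)).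
Variables (M : 'M[{poly F}]_(p + ph, m + mh)).
Variables (K1h : 'M[F]_(m, m + mh)) (K2h : 'M[F]_(p, p + ph)).
Variables (N1h : 'M[{poly F}]_(mh, m + mh)) (N2h : 'M[{poly F}]_(ph, p + ph)).
Hypothesis hG : G = mxQ D + ssreal A B C.
Hypothesis hD : D = N2 *m M *m N1^T.
Hypothesis hU1 : unimodular_completion K1 K1h N1h N1.
Hypothesis hU2 : unimodular_completion K2 K2h N2h N2.

Let Gh := Ghat A B C M K1 K2 K1h K2h.

Lemma Ghat_blockE :
  Gh = blockGhat (mxQ M) (ssreal A B C) (mxQ K1) (mxFQ K1h) (mxQ K2) (mxFQ K2h).
Proof. by rewrite /Gh /Ghat /blockGhat mxFQT mxQT. Qed.

Lemma mxQ_Zmx : mxQ (Zmx M N1 N2h) = blockZ (mxQ M) (mxQ N1) (mxQ N2h).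
Proof. by rewrite /Zmx /blockZ mxQ_col_mx mxQN !mxQM mxQT. Qed.

Lemma G_blockE : G = mxQ N2 *m mxQ M *m (mxQ N1)^T + ssreal A B C.
Proof. by rewrite hG hD !mxQM mxQT. Qed.

Lemma Ghat_Zmx : Gh *m mxQ (Zmx M N1 N2h) = col_mx (mxFQ K2h)^T 0 *m G.
Proof.
have [UV1 _] := unimodular_completionQ hU1; have [_ VU2] := unimodular_completionQ hU2.
by rewrite Ghat_blockE mxQ_Zmx G_blockE (blockGhat_Z _ _ UV1 VU2).
Qed.

Lemma rnull_Ghat : (rnull Gh :=: rnull G *m (mxQ (Zmx M N1 N2h))^T)%MS.
Proof.
have [_ VU1] := unimodular_completionQ hU1; have [UV2 _] := unimodular_completionQ hU2.
apply: (kermx_tr_factor (P := blockZinv ph (mxFQ K1h)) Ghat_Zmx).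
rewrite Ghat_blockE mxQ_Zmx G_blockE => k X.
exact: (blockGhat_kernel (M := mxQ M) (Rsp := ssreal A B C) VU1 UV2).
Qed.

Hypothesis hK2 : minimal_basis K2.
Hypothesis hK2deg : forall i, rowdeg K2 i = 1%N.
Hypothesis hMpencil : (pmxdeg M <= 1)%N.

Lemma pmxdeg_Zmx_null (h : 'cV_m) :
  G *m mxQ h = 0 -> pmxdeg (Zmx M N1 N2h *m h) = pmxdeg (N1^T *m h).
Proof.
move=> null_h; rewrite mul_col_mx mulNmx pmxdeg_col_mx pmxdegN; apply/maxn_idPl.
have [_ _ _ K1hN1] := completion_blocks hU1.1.
have degh : (pmxdeg h <= pmxdeg (N1^T *m h))%N.
  rewrite -{1}[h]mul1mx -K1hN1 -mulmxA.
  by apply: leq_trans (pmxdegM _ _) _; rewrite pmxdegFP.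
rewrite -!mulmxA; apply: (pmxdeg_Nhat_mul hK2 hK2deg (completion_sum_tr hU2.2)).
  by apply: leq_trans (pmxdegM _ _) _; rewrite addnC -[X in (_ <= X)%N]addn1 leq_add2l.
rewrite !mulmxA -hD; apply: leq_trans (leqW degh).
by apply: (pmxdeg_null_polypart (A := A) (B := B) (C := C)); rewrite -hG.
Qed.

End StrongLinearization.

Theorem lemma6p1 (F : fieldType) (p m n ph mh : nat)
  (G : 'M[ratF F]_(p, m)) (D : 'M[{poly F}]_(p, m))
  (A : 'M[F]_n) (B : 'M[F]_(n, m)) (C : 'M[F]_(p, n))
  (K1 : 'M[{poly F}]_(mh, m + mh)) (K2 : 'M[{poly F}]_(ph, p + ph))
  (N1 : 'M[{poly F}]_(m, m + mh)) (N2 : 'M[{poly F}]_(p, p + ph))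
  (M : 'M[{poly F}]_(p + ph, m + mh))
  (K1h : 'M[F]_(m, m + mh)) (K2h : 'M[F]_(p, p + ph))
  (N1h : 'M[{poly F}]_(mh, m + mh)) (N2h : 'M[{poly F}]_(ph, p + ph))
  (T S : 'M[F]_n)
  (hG : G = mxQ D + ssreal A B C)
  (hmin : minimal_realization A B C)
  (hdegD : (1 < pmxdeg D)%N)
  (hK1 : minimal_basis K1) (hK1deg : forall i, rowdeg K1 i = 1%N)
  (hK2 : minimal_basis K2) (hK2deg : forall i, rowdeg K2 i = 1%N)
  (hdual1 : dual_minimal_bases K1 N1) (hdual2 : dual_minimal_bases K2 N2)
  (hN1deg : exists d, forall i, rowdeg N1 i = d)
  (hN2deg : exists d, forall i, rowdeg N2 i = d)
  (hMpencil : (pmxdeg M <= 1)%N)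
  (hD : D = N2 *m M *m N1^T)
  (hdegD' : pmxdeg D = (pmxdeg N1 + pmxdeg N2 + 1)%N)
  (hU1 : unimodular_completion K1 K1h N1h N1)
  (hU2 : unimodular_completion K2 K2h N2h N2)
  (hT : T \in unitmx) (hS : S \in unitmx) :
  (forall h : 'cV[ratF F]_m, G *m h = 0 ->
     Ghat A B C M K1 K2 K1h K2h *m (mxQ (Zmx M N1 N2h) *m h) = 0) /\
  (forall h : 'cV[{poly F}]_m, G *m mxQ h = 0 -> h != 0 ->
     exists z : 'cV[{poly F}]_(m + mh + ph),
       [/\ mxQ z = mxQ (Zmx M N1 N2h) *m mxQ h,
           pmxdeg z = pmxdeg (N1^T *m h) &
           pmxdeg (N1^T *m h) = (pmxdeg N1 + pmxdeg h)%N]) /\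
  (forall l (H : 'M[{poly F}]_(m, l)),
     right_minimal_basis G H ->
     right_minimal_basis (Ghat A B C M K1 K2 K1h K2h) (Zmx M N1 N2h *m H)).
Proof.
have [d1 N1deg] := hN1deg; have [_ N1min _ _] := hdual1.
have degZ := pmxdeg_Zmx_null hG hD hU1 hU2 hK2 hK2deg hMpencil.
split; [|split].
- by move=> h null_h; rewrite mulmxA (Ghat_Zmx hG hD hU1 hU2) -mulmxA null_h mulmx0.
- move=> h null_h h0; exists (Zmx M N1 N2h *m h); split; [exact: mxQM | exact: degZ |].
  have /cV0Pn[i0 _] := h0.
  by rewrite (pmxdeg_rowdeg_const i0 N1deg) (pmxdeg_minimal_basis_mul N1min N1deg h0).
move=> l H; apply: (right_minimal_basis_mul (P := blockZinv ph (mxFP K1h)) (d := d1)).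
- exact: (blockZinvK M N2h hU1.1 : _ *m Zmx M N1 N2h = _).
- exact: rnull_Ghat hG hD hU1 hU2.
- by move=> h; apply: pmxdeg_Zmx_ge N1min N1deg.
- move=> h /degZ ->; apply: leq_trans (pmxdegM _ _) _; rewrite pmxdeg_tr leq_add2r.
  by apply/pmxdeg_leP => i j; rewrite -(N1deg i) rowdeg_ge.
Qed.
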